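(* Let $N\ge 3$ and $0\le t\le \frac1N$, and let $|\psi_{\vec t}\rangle=\sqrt{1-Nt}\,|00\cdots0\rangle+\sqrt t\,(|10\cdots0\rangle+|01\cdots0\rangle+\cdots+|00\cdots1\rangle)$ be an $N$-qubit state. The optimal LOCC success probability for randomly distilling $|\psi_{\vec t}\rangle$ into an EPR pair shared between party 1 and some other party $j\in\{2,\dots,N\}$ (all remaining parties in a product state) is at most $$1-\sqrt{1-4(N-1)t^2}.$$
   Context: An EPR pair between parties $i,j$ is a state local-unitarily equivalent to $\frac1{\sqrt2}(|00\rangle+|11\rangle)_{ij}$. The optimal success probability is the supremum over LOCC (local operations and classical communication) protocols acting on a single copy of the state of the total probability that, for some $j\in\{2,\dots,N\}$, the final state is an EPR pair between parties $1$ and $j$ with all other parties in a product state. *)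

From HB Require Import structures.
From mathcomp Require Import all_boot all_order all_algebra.
From Stdlib Require Import ClassicalEpsilon.
Set Implicit Arguments. Unset Strict Implicit. Unset Printing Implicit Defensive.
Import Order.TTheory GRing.Theory Num.Theory.
Local Open Scope ring_scope.

Definition pdec (P : Prop) : bool :=
  if excluded_middle_informative P then true else false.

Section QState.
Variables (C : numClosedFieldType) (N D : nat).

(* computational basis of N parties, each with local dimension D *)
Definition basis := {ffun 'I_N -> 'I_D}.

(* (unnormalized) pure state: amplitude function on the basis *)
Definition state := basis -> C.

Definition upd (x : basis) (k : 'I_N) (a : 'I_D) : basis :=
  [ffun i => if i == k then a else x i].

(* apply the local operator M (a D x D matrix) to party k *)
Definition applyL (k : 'I_N) (M : 'M[C]_D) (psi : state) : state :=
  fun x => \sum_(a : 'I_D) M (x k) a * psi (upd x k a).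

Definition nrm2 (psi : state) : C := \sum_(x : basis) psi x * (psi x)^*.

Definition adj (M : 'M[C]_D) : 'M[C]_D := (map_mx Num.conj M)^T.

Definition orthonormal2 (u0 u1 : 'I_D -> C) : Prop :=
  \sum_a u0 a * (u0 a)^* = 1 /\ \sum_a u1 a * (u1 a)^* = 1 /\
  \sum_a u0 a * (u1 a)^* = 0.

(* phi is (proportional to) an EPR pair between party 1 (index ord 0) and
   party j <> 1, up to local unitaries/isometries, tensored with a product
   state on all other parties. *)
Definition EPR_leaf (phi : state) : Prop :=
  exists (j : 'I_N) (u0 u1 v0 v1 : 'I_D -> C) (w : 'I_N -> 'I_D -> C) (c : C),
    (nat_of_ord j != 0%N) /\ orthonormal2 u0 u1 /\ orthonormal2 v0 v1 /\
    forall x : basis,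
      phi x = c * (\sum_(i0 : 'I_N | nat_of_ord i0 == 0%N)
                     (u0 (x i0) * v0 (x j) + u1 (x i0) * v1 (x j)))
                * \prod_(k : 'I_N | (nat_of_ord k != 0%N) && (k != j)) w k (x k).

End QState.

(* Finite-round LOCC protocol (tree): at each node a party k performs a
   measurement with Kraus operators K i (i < m), the outcome is broadcast and
   the protocol continues with nx i. *)
Inductive locc (C : numClosedFieldType) (N D : nat) : Type :=
| Stop : locc C N D
| Meas : 'I_N -> forall m : nat, ('I_m -> 'M[C]_D) -> ('I_m -> locc C N D) -> locc C N D.

Arguments Stop {C N D}.

Fixpoint valid_locc (C : numClosedFieldType) (N D : nat) (p : locc C N D) : Prop :=
  match p with
  | Stop => True
  | Meas k m K nx =>
      (\sum_(i < m) adj (K i) *m K i = 1%:M) /\ forall i, valid_locc (nx i)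
  end.

Fixpoint succ_prob (C : numClosedFieldType) (N D : nat) (p : locc C N D)
    (psi : state C N D) : C :=
  match p with
  | Stop => if pdec (EPR_leaf psi) then nrm2 psi else 0
  | Meas k m K nx => \sum_(i < m) succ_prob (nx i) (applyL k (K i) psi)
  end.

(* |psi_t> embedded in local dimension D >= 2 (levels 0,1 = qubit) *)
Definition psi_t (C : numClosedFieldType) (N D : nat) (t : C) : state C N D :=
  fun x => if [forall k, (nat_of_ord (x k) <= 1)%N] then
             (if (\sum_k nat_of_ord (x k) == 0)%N then sqrtC (1 - N%:R * t)
              else if (\sum_k nat_of_ord (x k) == 1)%N then sqrtC t else 0)
           else 0.

From HB Require Import structures.
From mathcomp Require Import all_boot all_order all_algebra.
From mathcomp Require Import ring zify.
From Stdlib Require Import ClassicalEpsilon.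
Set Implicit Arguments. Unset Strict Implicit. Unset Printing Implicit Defensive.
Import Order.TTheory GRing.Theory Num.Theory.
Local Open Scope ring_scope.

(* Write <F, P> for the inner product of (unnormalised) states and
   ov(F, P) = |<F, P>|^2 / <F, F> for the squared overlap of P with the
   direction of F.  Fix a state F that is a product between party 1 and the
   other parties.  By induction on the protocol tree, the success
   probability of an LOCC protocol started from P is at most
   2 (<P, P> - ov(F, P)):
   - at a leaf holding an EPR pair phi between party 1 and some party j,
     ov(F, phi) <= <phi, phi> / 2, by Bessel's inequality applied to the
     Schmidt decomposition of the pair;
   - at a measurement with Kraus operators K_i, the states K_i F are again
     product states, sum_i <K_i P, K_i P> = <P, P> by completeness, and
     ov(F, P) <= sum_i ov(K_i F, K_i P) by a weighted Cauchy–Schwarz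
     inequality.
   For |psi_t> we take F = a (x) (contraction of psi_t on a), where a is the
   top eigenvector of the reduced density matrix [[1 - t, su], [su, t]] of
   party 1 (s = sqrt(1 - Nt), u = sqrt t); then ov(F, psi_t) = (1 + r)/2 with
   r = sqrt(1 - 4(N-1)t^2), and the bound becomes 1 - r. *)

Section BasisUpdate.
Variables N D : nat.
Implicit Types (x : basis N D) (k l : 'I_N) (a b : 'I_D).

Lemma updE x k a i : upd x k a i = if i == k then a else x i.
Proof. by rewrite /upd ffunE. Qed.

Lemma upd_at x k a : upd x k a k = a.
Proof. by rewrite updE eqxx. Qed.

Lemma upd_ne x k a i : i != k -> upd x k a i = x i.
Proof. by rewrite updE => /negbTE ->. Qed.

Lemma upd_upd x k a b : upd (upd x k a) k b = upd x k b.
Proof. by apply/ffunP=> i; rewrite !updE; case: eqP. Qed.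

Lemma upd_comm x k l a b : k != l ->
  upd (upd x k a) l b = upd (upd x l b) k a.
Proof.
move=> kl; apply/ffunP=> i; rewrite !updE.
case: (eqVneq i l) => [il|il]; case: (eqVneq i k) => [ik|ik] //.
by move: kl; rewrite -ik -il eqxx.
Qed.

Lemma upd_eq_id x k a : (upd x k a == x) = (x k == a).
Proof.
apply/eqP/eqP => [<-|xa]; first by rewrite upd_at.
by apply/ffunP=> i; rewrite updE; case: eqP => // ->.
Qed.

End BasisUpdate.

Section Slicing.
Variables (R : nmodType) (N D : nat).
Implicit Types (x : basis N D) (G : basis N D -> R) (k j : 'I_N) (d : 'I_D).

Lemma sum_fibre k (d0 : 'I_D) d G :
  \sum_(x : basis N D | x k == d) G x = \sum_(x : basis N D | x k == d0) G (upd x k d).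
Proof.
rewrite (reindex_onto (fun x => upd x k d) (fun x => upd x k d0)) /=.
  by apply: eq_bigl => x; rewrite upd_at eqxx upd_upd upd_eq_id.
by move=> x /eqP <-; rewrite upd_upd; apply/eqP; rewrite upd_eq_id.
Qed.

Lemma sum_slice k (d0 : 'I_D) G :
  \sum_(x : basis N D) G x = \sum_(x : basis N D | x k == d0) \sum_d G (upd x k d).
Proof.
rewrite (partition_big (fun x : basis N D => x k) predT) //= exchange_big /=.
by apply: eq_bigr => d _; rewrite -sum_fibre.
Qed.

Lemma sum_slice_in k j (d0 : 'I_D) G : k != j ->
  \sum_(x : basis N D | x k == d0) G x =
  \sum_(x : basis N D | (x k == d0) && (x j == d0)) \sum_d G (upd x j d).
Proof.
move=> kj; rewrite big_mkcond (sum_slice j d0) [RHS](eq_bigl _ _ (fun x => andbC _ _)).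
rewrite big_mkcondr /=; apply: eq_bigr => x _.
rewrite (eq_bigr (fun d => if x k == d0 then G (upd x j d) else 0)) => [|d _].
  by case: ifP => _; rewrite ?big1_eq.
by rewrite upd_ne.
Qed.

End Slicing.

Section InnerProduct.
Variables (C : numClosedFieldType) (I : finType).
Implicit Types (f g : I -> C).

Definition dotp f g : C := \sum_i (f i)^* * g i.

Lemma dotp_conj f g : (dotp f g)^* = dotp g f.
Proof.
rewrite /dotp rmorph_sum; apply: eq_bigr => i _.
by rewrite rmorphM /= conjCK mulrC.
Qed.

Lemma dotp_normE f : dotp f f = \sum_i `|f i| ^+ 2.
Proof. by apply: eq_bigr => i _; rewrite normCKC. Qed.

Lemma dotp_ge0 f : 0 <= dotp f f.
Proof. by apply: sumr_ge0 => i _; rewrite mulrC mul_conjC_ge0. Qed.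

Lemma dotp_eq0 f : dotp f f = 0 -> forall i, f i = 0.
Proof.
move=> f0 i; have ge0 j : true -> 0 <= (f j)^* * f j by rewrite mulrC mul_conjC_ge0.
have := psumr_eq0P ge0 f0 (i := i) isT.
by move=> /eqP; rewrite mulf_eq0 conjC_eq0 orbb => /eqP.
Qed.

(* The Cauchy–Schwarz inequality, proved from the residual A g - <f, g> f,
   where A = <f, f>. *)
Theorem cauchy_schwarz f g : `|dotp f g| ^+ 2 <= dotp f f * dotp g g.
Proof.
set A := dotp f f; set B := dotp g g; set z := dotp f g.
have A0 : 0 <= A := dotp_ge0 f.
have [A00|An0] := eqVneq A 0.
  have -> : z = 0 by rewrite /z /dotp big1 // => i _; rewrite (dotp_eq0 A00) conjC0 mul0r.
  by rewrite A00 normr0 expr0n mul0r.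
pose h i := A * g i - z * f i.
have Ac : A^* = A := geC0_conj A0.
have eh : dotp h h = A * (A * B - `|z| ^+ 2).
  rewrite /dotp (eq_bigr (fun i => A * A * ((g i)^* * g i) - A * z * ((g i)^* * f i)
     - A * z^* * ((f i)^* * g i) + z * z^* * ((f i)^* * f i))); last first.
    by move=> i _; rewrite /h !rmorphB !rmorphM /= Ac; ring.
  rewrite !big_split /= !sumrN -!mulr_sumr -/(dotp g g) -/(dotp g f) -/(dotp f g).
  by rewrite -/(dotp f f) -[dotp g f]dotp_conj -/A -/B -/z normCK; ring.
have : 0 <= A * (A * B - `|z| ^+ 2) by rewrite -eh dotp_ge0.
by rewrite pmulr_rge0 ?subr_ge0 // lt_def An0.
Qed.

Lemma cauchy_schwarz_weighted (n z : I -> C) :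
  (forall i, 0 <= n i) -> (forall i, n i = 0 -> z i = 0) ->
  `|\sum_i z i| ^+ 2 <= (\sum_i n i) * \sum_i `|z i| ^+ 2 / n i.
Proof.
move=> n0 nz.
pose f i := sqrtC (n i); pose g i := z i / sqrtC (n i).
have fc i : (f i)^* = f i by apply: geC0_conj; rewrite sqrtC_ge0.
have efg : dotp f g = \sum_i z i.
  apply: eq_bigr => i _; rewrite fc /f /g.
  have [e|ne] := eqVneq (n i) 0; first by rewrite e sqrtC0 mul0r nz.
  by rewrite mulrC divfK // sqrtC_eq0.
have eff : dotp f f = \sum_i n i by apply: eq_bigr => i _; rewrite fc -expr2 sqrtCK.
have egg : dotp g g = \sum_i `|z i| ^+ 2 / n i.
  apply: eq_bigr => i _; rewrite /g rmorphM /= fmorphV /= fc.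
  by rewrite /f normCK -[in RHS](sqrtCK (n i)) expr2 invfM; ring.
by have := cauchy_schwarz f g; rewrite efg eff egg.
Qed.

Lemma dotp_mask (A : pred I) f g :
  dotp (fun i => if A i then f i else 0) (fun i => if A i then g i else 0) =
  \sum_(i | A i) (f i)^* * g i.
Proof.
rewrite /dotp [RHS]big_mkcond; apply: eq_bigr => i _.
by case: (A i); rewrite ?conjC0 ?mul0r.
Qed.

(* Squared overlap of g with the normalised vector f (zero when f = 0). *)
Definition overlap f g : C := `|dotp f g| ^+ 2 / dotp f f.

Lemma overlap_ge0 f g : 0 <= overlap f g.
Proof. by rewrite divr_ge0 ?exprn_ge0 ?dotp_ge0. Qed.

Lemma overlap_le f g : overlap f g <= dotp g g.
Proof.
have [f0|fn0] := eqVneq (dotp f f) 0; first by rewrite /overlap f0 invr0 mulr0 dotp_ge0.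
by rewrite ler_pdivrMr ?lt_def ?fn0 ?dotp_ge0 // mulrC cauchy_schwarz.
Qed.

End InnerProduct.

Section LocalOperations.
Variables (C : numClosedFieldType) (N D : nat).
Hypothesis D_gt0 : (0 < D)%N.
Implicit Types (P Q F : state C N D) (k z : 'I_N).

Let d0 : 'I_D := Ordinal D_gt0.

Lemma dotp_applyL k (M : 'M[C]_D) P Q :
  dotp (applyL k M P) (applyL k M Q) =
  \sum_(x : basis N D | x k == d0) \sum_a \sum_c
     ((\sum_d (M d a)^* * M d c) * ((P (upd x k a))^* * Q (upd x k c))).
Proof.
rewrite /dotp (sum_slice k d0); apply: eq_bigr => x _.
transitivity (\sum_d \sum_a \sum_c
   ((M d a)^* * M d c * ((P (upd x k a))^* * Q (upd x k c)))).
  apply: eq_bigr => d _; rewrite /applyL upd_at rmorph_sum mulr_suml.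
  apply: eq_bigr => a _; rewrite mulr_sumr; apply: eq_bigr => c _.
  by rewrite !upd_upd rmorphM /=; ring.
rewrite exchange_big; apply: eq_bigr => a _; rewrite exchange_big.
by apply: eq_bigr => c _; rewrite mulr_suml.
Qed.

Lemma kraus_entry m (K : 'I_m -> 'M[C]_D) :
  \sum_(i < m) adj (K i) *m K i = 1%:M ->
  forall a c : 'I_D, \sum_i \sum_d (K i d a)^* * K i d c = (a == c)%:R.
Proof.
move=> hK a c; have := congr1 (fun M : 'M[C]_D => M a c) hK.
rewrite /= summxE mxE => <-; apply: eq_bigr => i _; rewrite mxE.
by apply: eq_bigr => d _; rewrite /adj !mxE.
Qed.

Lemma dotp_kraus k m (K : 'I_m -> 'M[C]_D) P Q :
  \sum_(i < m) adj (K i) *m K i = 1%:M ->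
  \sum_i dotp (applyL k (K i) P) (applyL k (K i) Q) = dotp P Q.
Proof.
move=> /kraus_entry hK; under eq_bigr do rewrite dotp_applyL.
rewrite exchange_big /= [RHS](sum_slice k d0); apply: eq_bigr => x _.
rewrite exchange_big; apply: eq_bigr => a _; rewrite exchange_big /=.
rewrite (bigD1 a) //= [X in _ + X]big1 => [|c ca]; rewrite -mulr_suml hK.
  by rewrite eqxx mul1r addr0.
by rewrite eq_sym (negbTE ca) mul0r.
Qed.

Definition split_at z F : Prop :=
  exists (a : 'I_D -> C) (b : basis N D -> C),
    (forall x c, b (upd x z c) = b x) /\ forall x, F x = a (x z) * b x.

Lemma split_applyL z k (M : 'M[C]_D) F : split_at z F -> split_at z (applyL k M F).
Proof.
move=> [a [b [hb hF]]].
have [->|kz] := eqVneq k z.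
  exists (fun d => \sum_c M d c * a c), b; split => // x.
  rewrite /applyL mulr_suml; apply: eq_bigr => c _.
  by rewrite hF upd_at hb mulrA.
exists a, (fun x : basis N D => \sum_c M (x k) c * b (upd x k c)); split.
  move=> x e; rewrite upd_ne //; apply: eq_bigr => c _.
  by rewrite upd_comm 1?eq_sym // hb.
move=> x; rewrite /applyL mulr_sumr; apply: eq_bigr => c _.
by rewrite hF upd_ne 1?eq_sym //; ring.
Qed.

Lemma overlap_kraus k m (K : 'I_m -> 'M[C]_D) F P :
  \sum_(i < m) adj (K i) *m K i = 1%:M ->
  overlap F P <= \sum_i overlap (applyL k (K i) F) (applyL k (K i) P).
Proof.
move=> hK; set wF := fun i => dotp (applyL k (K i) F) (applyL k (K i) F).
set cross := fun i => dotp (applyL k (K i) F) (applyL k (K i) P).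
have wF0 i : wF i = 0 -> cross i = 0.
  move=> wFi0; apply/eqP; rewrite -normr_eq0 -sqrf_eq0 eq_le exprn_ge0 ?andbT //.
  have := cauchy_schwarz (applyL k (K i) F) (applyL k (K i) P).
  by rewrite -/(wF i) wFi0 mul0r.
have := cauchy_schwarz_weighted (fun i => dotp_ge0 _) wF0.
rewrite /cross /wF !dotp_kraus // => cs.
have [F0|Fn0] := eqVneq (dotp F F) 0.
  by rewrite /overlap F0 invr0 mulr0 sumr_ge0 // => i _; apply: overlap_ge0.
by rewrite /overlap ler_pdivrMr ?lt_def ?Fn0 ?dotp_ge0 // mulrC.
Qed.

End LocalOperations.

Section OrthonormalPairs.
Variables (C : numClosedFieldType) (D : nat).
Implicit Types (a : 'I_D -> C).

Lemma orthonormal2_dotp (u0 u1 : 'I_D -> C) : orthonormal2 u0 u1 ->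
  [/\ dotp u0 u0 = 1, dotp u1 u1 = 1, dotp u0 u1 = 0 & dotp u1 u0 = 0].
Proof.
have dotpC f g : dotp g f = \sum_i f i * (g i)^* by apply: eq_bigr => i _; rewrite mulrC.
case; rewrite -!dotpC => h0 [h1 h10]; split => //.
by rewrite -dotp_conj h10 conjC0.
Qed.

Lemma orthonormal2_norm (u0 u1 : 'I_D -> C) (x0 x1 : C) : orthonormal2 u0 u1 ->
  \sum_e `|x0 * u0 e + x1 * u1 e| ^+ 2 = `|x0| ^+ 2 + `|x1| ^+ 2.
Proof.
case/orthonormal2_dotp => h0 h1 h01 h10.
rewrite (eq_bigr (fun e => x0^* * x0 * ((u0 e)^* * u0 e) + x0^* * x1 * ((u0 e)^* * u1 e)
   + x1^* * x0 * ((u1 e)^* * u0 e) + x1^* * x1 * ((u1 e)^* * u1 e))) => [|e _]; last first.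
  by rewrite normCKC rmorphD !rmorphM; ring.
rewrite !big_split /= -!mulr_sumr -/(dotp u0 u0) -/(dotp u0 u1) -/(dotp u1 u0).
by rewrite -/(dotp u1 u1) h0 h1 h01 h10 !normCKC; ring.
Qed.

Lemma bessel2 (u0 u1 : 'I_D -> C) a : orthonormal2 u0 u1 ->
  `|dotp a u0| ^+ 2 + `|dotp a u1| ^+ 2 <= dotp a a.
Proof.
case/orthonormal2_dotp => h0 h1 h01 h10.
pose al0 := dotp u0 a; pose al1 := dotp u1 a.
have c0 : dotp a u0 = al0^* by rewrite dotp_conj.
have c1 : dotp a u1 = al1^* by rewrite dotp_conj.
(* the residual of a after projection on span(u0, u1) has norm a.a - |al0|^2 - |al1|^2 *)
pose r e := a e - al0 * u0 e - al1 * u1 e.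
have er : dotp r r = dotp a a - `|dotp a u0| ^+ 2 - `|dotp a u1| ^+ 2.
  rewrite /dotp (eq_bigr (fun e => (a e)^* * a e - al0 * ((a e)^* * u0 e)
     - al1 * ((a e)^* * u1 e) - al0^* * ((u0 e)^* * a e) - al1^* * ((u1 e)^* * a e)
     + al0^* * al0 * ((u0 e)^* * u0 e) + al0^* * al1 * ((u0 e)^* * u1 e)
     + al1^* * al0 * ((u1 e)^* * u0 e) + al1^* * al1 * ((u1 e)^* * u1 e))) => [|e _].
    rewrite !big_split /= !sumrN -!mulr_sumr -/(dotp a a) -/(dotp a u0) -/(dotp a u1).
    rewrite -/(dotp u0 a) -/(dotp u1 a) -/(dotp u0 u0) -/(dotp u0 u1) -/(dotp u1 u0).
    by rewrite -/(dotp u1 u1) -/al0 -/al1 h0 h1 h01 h10 !normCKC c0 c1 !conjCK; ring.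
  by rewrite /r !rmorphB !rmorphM; ring.
by rewrite -subr_ge0 opprD addrA -er dotp_ge0.
Qed.

End OrthonormalPairs.

Section EPRLeaf.
Variables (C : numClosedFieldType) (N D : nat).
Hypothesis D_gt0 : (0 < D)%N.
Variable z : 'I_N.
Hypothesis z_first : nat_of_ord z = 0%N.
Implicit Types (F phi : state C N D) (a : 'I_D -> C).

Let d0 : 'I_D := Ordinal D_gt0.

Lemma EPR_leafP phi : EPR_leaf phi ->
  exists j (u0 u1 v0 v1 : 'I_D -> C) (W : basis N D -> C),
    [/\ j != z, orthonormal2 u0 u1, orthonormal2 v0 v1,
        forall x e, W (upd x z e) = W x /\ W (upd x j e) = W x &
        forall x, phi x = (u0 (x z) * v0 (x j) + u1 (x z) * v1 (x j)) * W x].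
Proof.
move=> [j [u0 [u1 [v0 [v1 [w [c [hj [ou [ov hphi]]]]]]]]]].
have pz i : (nat_of_ord i == 0%N) = (i == z).
  by rewrite -z_first; apply/eqP/eqP => [/val_inj|->].
pose W x := c * \prod_(k : 'I_N | (nat_of_ord k != 0%N) && (k != j)) w k (x k).
exists j, u0, u1, v0, v1, W; split => //; first by rewrite -pz.
  move=> x e; split; congr (c * _); apply: eq_bigr => k /andP [k0 kj].
    by rewrite upd_ne // -pz.
  by rewrite upd_ne.
move=> x; rewrite hphi (big_pred1 z) => [|i]; last by rewrite /= pz.
by rewrite /W mulrA [c * _]mulrC.
Qed.

Definition contract a phi : state C N D :=
  fun x => \sum_d (a d)^* * phi (upd x z d).

Section ProductState.
Variables (F : state C N D) (a : 'I_D -> C) (b : basis N D -> C).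
Hypotheses (b_indep : forall x c, b (upd x z c) = b x)
           (F_split : forall x, F x = a (x z) * b x).

Lemma split_norm :
  dotp F F = dotp a a * \sum_(x : basis N D | x z == d0) (b x)^* * b x.
Proof.
rewrite /dotp (sum_slice z d0) mulr_sumr; apply: eq_bigr => x _.
rewrite mulr_suml; apply: eq_bigr => d _.
by rewrite F_split upd_at b_indep rmorphM; ring.
Qed.

Lemma split_dotp phi :
  dotp F phi = \sum_(x : basis N D | x z == d0) (b x)^* * contract a phi x.
Proof.
rewrite /dotp (sum_slice z d0); apply: eq_bigr => x _.
rewrite /contract mulr_sumr; apply: eq_bigr => d _.
by rewrite F_split upd_at b_indep rmorphM; ring.
Qed.

Lemma split_overlap phi :
  `|dotp F phi| ^+ 2 <=
  (\sum_(x : basis N D | x z == d0) (b x)^* * b x) *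
  \sum_(x : basis N D | x z == d0) (contract a phi x)^* * contract a phi x.
Proof. by rewrite split_dotp -!dotp_mask; exact: cauchy_schwarz. Qed.

End ProductState.

Lemma contract_indep a phi x c : contract a phi (upd x z c) = contract a phi x.
Proof. by apply: eq_bigr => d _; rewrite upd_upd. Qed.

(* The best product state with first factor a: a on party z times the
   contraction of phi on a for the others. *)
Definition best_product a phi : state C N D := fun x => a (x z) * contract a phi x.

Lemma best_product_split a phi : split_at z (best_product a phi).
Proof. by exists a, (contract a phi); split => // x c; apply: contract_indep. Qed.

Lemma overlap_best_product a phi :
  overlap (best_product a phi) phi =
  (\sum_(x : basis N D | x z == d0) (contract a phi x)^* * contract a phi x) / dotp a a.
Proof.
have indep := contract_indep a phi; have split_def x : best_product a phi x = _ := erefl.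
set g := \sum_(x : basis N D | x z == d0) _.
have g0 : 0 <= g by apply: sumr_ge0 => x _; rewrite mulrC mul_conjC_ge0.
rewrite /overlap (split_dotp indep split_def) (split_norm indep split_def) -/g.
rewrite ger0_norm //; have [->|gn0] := eqVneq g 0; first by rewrite expr0n !mul0r.
have [->|An0] := eqVneq (dotp a a) 0; first by rewrite mul0r !invr0 !mulr0.
by field; rewrite gn0 An0.
Qed.

Lemma epr_contract a phi : EPR_leaf phi ->
  2%:R * \sum_(x : basis N D | x z == d0) (contract a phi x)^* * contract a phi x
  <= dotp a a * dotp phi phi.
Proof.
move=> /EPR_leafP [j [u0 [u1 [v0 [v1 [W [jz ou ov hW hphi]]]]]]].
have zj : z != j by rewrite eq_sym.
set al0 := dotp a u0; set al1 := dotp a u1.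
set wn := \sum_(x : basis N D | (x z == d0) && (x j == d0)) (W x)^* * W x.
have phiE x d e : phi (upd (upd x j e) z d) = (u0 d * v0 e + u1 d * v1 e) * W x.
  by rewrite hphi upd_at upd_ne // upd_at (hW _ _).1 (hW _ _).2.
have contractE x e : contract a phi (upd x j e) = (al0 * v0 e + al1 * v1 e) * W x.
  rewrite /contract (eq_bigr (fun d => (a d)^* * u0 d * (v0 e * W x)
                                     + (a d)^* * u1 d * (v1 e * W x))) => [|d _].
    rewrite big_split /= -mulr_suml -mulr_suml -/(dotp a u0) -/(dotp a u1).
    by rewrite -/al0 -/al1; ring.
  by rewrite phiE; ring.
have contract_norm : \sum_(x : basis N D | x z == d0) (contract a phi x)^* * contract a phi x
                     = (`|al0| ^+ 2 + `|al1| ^+ 2) * wn.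
  rewrite (sum_slice_in _ _ zj) /wn mulr_sumr; apply: eq_bigr => x _.
  rewrite (eq_bigr (fun e => (W x)^* * W x * `|al0 * v0 e + al1 * v1 e| ^+ 2)) => [|e _].
    by rewrite -mulr_sumr orthonormal2_norm // mulrC.
  by rewrite contractE normCKC rmorphM; ring.
have phi_norm : dotp phi phi = 2%:R * wn.
  rewrite /dotp (sum_slice z d0) (sum_slice_in _ _ zj) /wn mulr_sumr.
  apply: eq_bigr => x _.
  rewrite (eq_bigr (fun e => (W x)^* * W x *
                     \sum_d `|u0 d * v0 e + u1 d * v1 e| ^+ 2)) => [|e _]; last first.
    by rewrite mulr_sumr; apply: eq_bigr => d _; rewrite phiE normCKC rmorphM; ring.
  rewrite -mulr_sumr exchange_big /=; under eq_bigr do rewrite orthonormal2_norm //.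
  case/orthonormal2_dotp: ou => u00 u11 _ _.
  by rewrite big_split /= -!dotp_normE u00 u11 mulrC.
have wn0 : 0 <= wn by apply: sumr_ge0 => x _; rewrite mulrC mul_conjC_ge0.
rewrite contract_norm phi_norm mulrCA.
by apply: ler_wpM2r; [rewrite mulr_ge0 | apply: bessel2].
Qed.

Lemma epr_overlap F phi : split_at z F -> EPR_leaf phi ->
  2%:R * `|dotp F phi| ^+ 2 <= dotp F F * dotp phi phi.
Proof.
move=> [a [b [b_indep F_split]]] epr.
set beta := \sum_(x : basis N D | x z == d0) (b x)^* * b x.
have beta0 : 0 <= beta by apply: sumr_ge0 => x _; rewrite mulrC mul_conjC_ge0.
rewrite (split_norm b_indep F_split) -/beta.
apply: le_trans (_ : beta * (2%:R * \sum_(x : basis N D | x z == d0)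
                         (contract a phi x)^* * contract a phi x) <= _).
  by rewrite [X in _ <= X]mulrCA ler_pM2l ?ltr0n // (split_overlap b_indep F_split).
have -> : dotp a a * beta * dotp phi phi = beta * (dotp a a * dotp phi phi) by ring.
by apply: ler_wpM2l => //; apply: epr_contract.
Qed.

End EPRLeaf.

Lemma pdecP (Q : Prop) : reflect Q (pdec Q).
Proof. by rewrite /pdec; case: excluded_middle_informative => h; constructor. Qed.

Section LOCCBound.
Variables (C : numClosedFieldType) (N D : nat).
Hypothesis D_gt0 : (0 < D)%N.
Variable z : 'I_N.
Hypothesis z_first : nat_of_ord z = 0%N.

Lemma nrm2_dotp (phi : state C N D) : nrm2 phi = dotp phi phi.
Proof. by apply: eq_bigr => x _; rewrite mulrC. Qed.

Lemma epr_overlap_half (F phi : state C N D) : split_at z F -> EPR_leaf phi ->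
  2%:R * overlap F phi <= dotp phi phi.
Proof.
move=> hF epr; have [F0|Fn0] := eqVneq (dotp F F) 0.
  by rewrite /overlap F0 invr0 !mulr0 dotp_ge0.
rewrite /overlap mulrA ler_pdivrMr ?lt_def ?Fn0 ?dotp_ge0 // [X in _ <= X]mulrC.
exact: (epr_overlap D_gt0 z_first hF epr).
Qed.

Theorem succ_prob_le_overlap (p : locc C N D) : valid_locc p ->
  forall P F : state C N D, split_at z F ->
  succ_prob p P <= 2%:R * (dotp P P - overlap F P).
Proof.
elim: p => [|k m K nx IH] /= hp P F hF.
  case: pdecP => [epr|_]; last by rewrite mulr_ge0 // subr_ge0 overlap_le.
  rewrite nrm2_dotp -subr_ge0.
  have -> : 2%:R * (dotp P P - overlap F P) - dotp P P =
            dotp P P - 2%:R * overlap F P by ring.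
  by rewrite subr_ge0 epr_overlap_half.
case: hp => hK hnx.
apply: le_trans (_ : \sum_i 2%:R * (dotp (applyL k (K i) P) (applyL k (K i) P)
          - overlap (applyL k (K i) F) (applyL k (K i) P)) <= _).
  by apply: ler_sum => i _; apply: IH => //; apply: split_applyL.
rewrite -mulr_sumr sumrB (dotp_kraus D_gt0) // ler_wpM2l // lerB //.
exact: (overlap_kraus D_gt0).
Qed.

End LOCCBound.

Lemma sum_delta (R : pzSemiRingType) (T : finType) (y : T) (G : T -> R) :
  \sum_x (x == y)%:R * G x = G y.
Proof.
rewrite (bigD1 y) //= eqxx mul1r big1 ?addr0 // => x.
by move=> /negbTE ->; rewrite mul0r.
Qed.

Section ComputationalBasis.
Variables N D : nat.
Hypothesis D_gt1 : (1 < D)%N.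

Definition lvl0 : 'I_D := Ordinal (ltnW D_gt1).
Definition lvl1 : 'I_D := Ordinal D_gt1.

Definition ground : basis N D := [ffun _ => lvl0].
Definition excited (k : 'I_N) : basis N D := [ffun i => if i == k then lvl1 else lvl0].

Lemma lvl0_neq1 : lvl0 != lvl1. Proof. by []. Qed.

Lemma excitedE k i : excited k i = if i == k then lvl1 else lvl0.
Proof. by rewrite ffunE. Qed.

Lemma excited_lvl0 (k i : 'I_N) : (excited k i == lvl0) = (i != k).
Proof.
rewrite excitedE; have [_|_] := eqVneq i k; last by rewrite eqxx.
by rewrite eq_sym (negbTE lvl0_neq1).
Qed.

Lemma excited_lvl1 (k i : 'I_N) : (excited k i == lvl1) = (i == k).
Proof.
rewrite excitedE; have [_|_] := eqVneq i k; first by rewrite eqxx.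
by rewrite (negbTE lvl0_neq1).
Qed.

Lemma excited_eq k l : (excited k == excited l) = (k == l).
Proof.
apply/eqP/eqP => [e|->] //; have := congr1 (fun x : basis N D => x k) e.
by rewrite !excitedE eqxx; case: eqP => // _ /eqP; rewrite eq_sym (negbTE lvl0_neq1).
Qed.

Lemma excited_ground k : (excited k == ground) = false.
Proof.
apply/negbTE/eqP => /(congr1 (fun x : basis N D => x k)).
by rewrite excitedE ffunE eqxx => /eqP; rewrite eq_sym (negbTE lvl0_neq1).
Qed.

Lemma ground_upd_excited k : upd (excited k) k lvl0 = ground.
Proof. by apply/ffunP => i; rewrite updE excitedE ffunE; case: eqP. Qed.

Lemma digit_sum0 (x : basis N D) : (\sum_k nat_of_ord (x k) == 0)%N -> x = ground.
Proof.
rewrite sum_nat_eq0 => /forallP x0; apply/ffunP => i; apply: val_inj.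
by rewrite ffunE /=; apply/eqP; apply: x0.
Qed.

Lemma digit_sum1 (x : basis N D) : (forall k, x k <= 1)%N ->
  (\sum_k nat_of_ord (x k) = 1)%N -> exists k, x = excited k.
Proof.
move=> le1 sum1; have : (\sum_k nat_of_ord (x k) != 0)%N by rewrite sum1.
rewrite sum_nat_eq0 negb_forall => /existsP [k /= xk0].
have xk1 : nat_of_ord (x k) = 1%N by move: (le1 k) xk0; case: (nat_of_ord (x k)) => [|[]].
exists k; apply/ffunP => i; apply: val_inj; rewrite /= excitedE.
have [->|ik] := eqVneq i k; first by rewrite xk1.
move: sum1; rewrite (bigD1 k) //= xk1 (bigD1 i) //= add1n.
by move=> /eqP; rewrite eqSS addn_eq0 => /andP [/eqP -> _].
Qed.

End ComputationalBasis.

Section PsiT.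
Variables (C : numClosedFieldType) (N D : nat) (t : C).
Hypothesis D_gt1 : (1 < D)%N.

Local Notation psi := (@psi_t C N D t).
Local Notation s := (sqrtC (1 - N%:R * t)).
Local Notation u := (sqrtC t).
Local Notation ground := (@ground N D D_gt1).
Local Notation excited := (@excited N D D_gt1).

Lemma psi_ground : psi ground = s.
Proof.
rewrite /psi_t (_ : [forall k, _] = true); last by apply/forallP => k; rewrite ffunE.
by rewrite (_ : \sum_k _ == 0)%N //; rewrite sum_nat_eq0; apply/forallP => k; rewrite ffunE.
Qed.

Lemma psi_excited k : psi (excited k) = u.
Proof.
rewrite /psi_t (_ : [forall i, _] = true); last first.
  by apply/forallP => i; rewrite excitedE; case: (i == k).
rewrite (_ : \sum_i _ = 1)%N // (bigD1 k) //= excitedE eqxx big1 // => i ik.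
by rewrite excitedE (negbTE ik).
Qed.

Lemma psi_tE x : psi x = (x == ground)%:R * s + (\sum_k (x == excited k)%:R) * u.
Proof.
have [->|xg] := eqVneq x ground.
  by rewrite psi_ground mul1r big1 ?mul0r ?addr0 // => k _; rewrite eq_sym excited_ground.
rewrite mul0r add0r.
have [k /eqP ->|nex] := pickP (fun k => x == excited k).
  rewrite psi_excited (bigD1 k) //= eqxx big1 ?addr0 ?mul1r // => l lk.
  by rewrite excited_eq eq_sym (negbTE lk).
rewrite big1 ?mul0r => [|k _]; last by rewrite nex.
rewrite /psi_t; case: ifP => // /forallP le1.
case: ifP => [/digit_sum0 xg0|_]; first by rewrite xg0 eqxx in xg.
by case: ifP => // /eqP /(digit_sum1 D_gt1 le1) [k xk]; move: (nex k); rewrite xk eqxx.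
Qed.

Lemma sum_psi_t (G : basis N D -> C) :
  \sum_x G x * psi x = G ground * s + (\sum_k G (excited k)) * u.
Proof.
transitivity (\sum_x ((x == ground)%:R * G x * s +
                      \sum_k (x == excited k)%:R * G x * u)).
  apply: eq_bigr => x _; rewrite psi_tE mulr_suml mulrDr mulr_sumr.
  by congr (_ + _); [ring | apply: eq_bigr => k _; ring].
rewrite big_split exchange_big /= -!mulr_suml sum_delta; congr (_ + _).
rewrite mulr_suml; apply: eq_bigr => k _.
by rewrite -mulr_suml sum_delta.
Qed.

End PsiT.

Section TwoLevel.
Variables (C : numClosedFieldType) (N D : nat).
Hypothesis D_gt1 : (1 < D)%N.
Local Notation lvl0 := (lvl0 D_gt1).
Local Notation lvl1 := (lvl1 D_gt1).

Definition two_level (a0 a1 : C) (d : 'I_D) : C :=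
  if d == lvl0 then a0 else if d == lvl1 then a1 else 0.

Lemma sum_two_level (a0 a1 : C) (G : 'I_D -> C) :
  \sum_d (two_level a0 a1 d)^* * G d = a0^* * G lvl0 + a1^* * G lvl1.
Proof.
rewrite (bigD1 lvl0) //= (bigD1 lvl1) //= big1 ?addr0 => [|d /andP [d1 d0]].
  by rewrite /two_level eqxx eq_sym (negbTE (lvl0_neq1 D_gt1)) eqxx.
by rewrite /two_level (negbTE d0) (negbTE d1) conjC0 mul0r.
Qed.

Lemma dotp_two_level (a0 a1 : C) :
  dotp (two_level a0 a1) (two_level a0 a1) = `|a0| ^+ 2 + `|a1| ^+ 2.
Proof.
rewrite /dotp sum_two_level /two_level eqxx eq_sym (negbTE (lvl0_neq1 D_gt1)) eqxx.
by rewrite !normCKC.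
Qed.

Lemma contract_two_level (z : 'I_N) (a0 a1 : C) (phi : state C N D) x :
  contract z (two_level a0 a1) phi x = a0^* * phi (upd x z lvl0) + a1^* * phi (upd x z lvl1).
Proof. exact: sum_two_level. Qed.

End TwoLevel.

Section PsiTWitness.
Variables (C : numClosedFieldType) (N D : nat) (t : C).
Hypothesis D_gt1 : (1 < D)%N.
Variable z : 'I_N.
Hypotheses (t_ge0 : 0 <= t) (Nt_le1 : N%:R * t <= 1).

Local Notation psi := (@psi_t C N D t).
Local Notation s := (sqrtC (1 - N%:R * t)).
Local Notation u := (sqrtC t).
Local Notation lvl0 := (lvl0 D_gt1).
Local Notation lvl1 := (lvl1 D_gt1).
Local Notation ground := (@ground N D D_gt1).
Local Notation excited := (@excited N D D_gt1).

Lemma psi_t_ge0 x : 0 <= psi x.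
Proof. by rewrite psi_tE addr_ge0 ?mulr_ge0 ?sumr_ge0 ?sqrtC_ge0 ?subr_ge0. Qed.

Lemma psi_t_norm : dotp psi psi = 1.
Proof.
rewrite /dotp (eq_bigr (fun x => psi x * psi x)) => [|x _]; last first.
  by rewrite geC0_conj ?psi_t_ge0.
rewrite sum_psi_t psi_ground; under eq_bigr do rewrite psi_excited.
by rewrite sumr_const card_ord -[u *+ N]mulr_natl -mulrA -!expr2 !sqrtCK; ring.
Qed.

Lemma sum_fibre_psi_t (d : 'I_D) (G : basis N D -> C) :
  \sum_(x : basis N D | x z == d) G x * psi x =
  (if ground z == d then G ground else 0) * s +
  (\sum_k if excited k z == d then G (excited k) else 0) * u.
Proof.
rewrite big_mkcond.
rewrite (eq_bigr (fun x : basis N D => (if x z == d then G x else 0) * psi x)) => [|x _].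
  exact: sum_psi_t.
by case: ifP; rewrite ?mul0r.
Qed.

(* The entries of the reduced density matrix of party z on levels 0 and 1. *)
Lemma rdm00 : \sum_(x : basis N D | x z == lvl0) psi x * psi x = 1 - t.
Proof.
rewrite sum_fibre_psi_t ffunE eqxx psi_ground.
under eq_bigr do rewrite excited_lvl0 psi_excited.
rewrite -big_mkcond (eq_bigl (fun k => k != z)) => [|k]; last by rewrite /= eq_sym.
rewrite sumr_const cardC1 card_ord -[u *+ _]mulr_natl -mulrA -!expr2 !sqrtCK.
by rewrite -subn1 natrB ?(leq_ltn_trans _ (ltn_ord z)) //; ring.
Qed.

Lemma rdm11 : \sum_(x : basis N D | x z == lvl0) psi (upd x z lvl1) * psi (upd x z lvl1) = t.
Proof.
rewrite -(sum_fibre z lvl0 lvl1 (fun x => psi x * psi x)) sum_fibre_psi_t.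
rewrite ffunE (negbTE (lvl0_neq1 D_gt1)) mul0r add0r.
under eq_bigr do rewrite excited_lvl1 psi_excited.
rewrite -big_mkcond (big_pred1 z) => [|k]; last by rewrite /= eq_sym.
by rewrite -expr2 sqrtCK.
Qed.

Lemma rdm01 : \sum_(x : basis N D | x z == lvl0) psi x * psi (upd x z lvl1) = s * u.
Proof.
transitivity (\sum_(x : basis N D | x z == lvl0)
               psi (upd (upd x z lvl1) z lvl0) * psi (upd x z lvl1)).
  by apply: eq_bigr => x xz; rewrite upd_upd (eqP (etrans (upd_eq_id _ _ _) xz)).
rewrite -(sum_fibre z lvl0 lvl1 (fun x => psi (upd x z lvl0) * psi x)) sum_fibre_psi_t.
rewrite ffunE (negbTE (lvl0_neq1 D_gt1)) mul0r add0r.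
under eq_bigr do rewrite excited_lvl1.
rewrite -big_mkcond (big_pred1 z) => [|k]; last by rewrite /= eq_sym.
by rewrite ground_upd_excited psi_ground.
Qed.

Lemma contract_psi_t_norm (a0 a1 : C) : 0 <= a0 -> 0 <= a1 ->
  \sum_(x : basis N D | x z == lvl0)
     (contract z (two_level D_gt1 a0 a1) psi x)^* * contract z (two_level D_gt1 a0 a1) psi x
  = a0 ^+ 2 * (1 - t) + 2%:R * a0 * a1 * (s * u) + a1 ^+ 2 * t.
Proof.
move=> a0_ge0 a1_ge0.
rewrite (eq_bigr (fun x => a0 ^+ 2 * (psi x * psi x)
   + 2%:R * a0 * a1 * (psi x * psi (upd x z lvl1))
   + a1 ^+ 2 * (psi (upd x z lvl1) * psi (upd x z lvl1)))) => [|x xz].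
  by rewrite !big_split /= -!mulr_sumr rdm00 rdm01 rdm11.
have x_fixed : upd x z lvl0 = x by apply/eqP; rewrite upd_eq_id.
rewrite geC0_conj; last first.
  by rewrite contract_two_level addr_ge0 ?mulr_ge0 ?conjC_ge0 ?psi_t_ge0.
by rewrite contract_two_level x_fixed (geC0_conj a0_ge0) (geC0_conj a1_ge0); ring.
Qed.

Lemma overlap_psi_t_witness (a0 a1 : C) : 0 <= a0 -> 0 <= a1 ->
  overlap (best_product z (two_level D_gt1 a0 a1) psi) psi =
  (a0 ^+ 2 * (1 - t) + 2%:R * a0 * a1 * (s * u) + a1 ^+ 2 * t) / (a0 ^+ 2 + a1 ^+ 2).
Proof.
move=> a0_ge0 a1_ge0.
rewrite (overlap_best_product (ltnW D_gt1)) contract_psi_t_norm // dotp_two_level.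
by rewrite !ger0_norm.
Qed.

End PsiTWitness.

(* For p = r + 1 - 2t and q = 2su, (p, q) is an eigenvector of the reduced
   density matrix [[1 - t, su], [su, t]] for the eigenvalue (1 + r)/2. *)
Lemma witness_eigen (C : numClosedFieldType) (n t s u r p q : C) :
  s ^+ 2 = 1 - n * t -> u ^+ 2 = t -> r ^+ 2 = 1 - 4%:R * (n - 1) * t ^+ 2 ->
  p = r + 1 - 2%:R * t -> q = 2%:R * s * u ->
  2%:R * (p ^+ 2 * (1 - t) + 2%:R * p * q * (s * u) + q ^+ 2 * t) =
  (1 + r) * (p ^+ 2 + q ^+ 2).
Proof.
move=> hs hu hr -> ->.
have su2 : (s * u) ^+ 2 = t * (1 - n * t) by rewrite exprMn hs hu mulrC.
have -> : (2%:R * s * u) ^+ 2 = 4%:R * (s * u) ^+ 2 by ring.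
rewrite (_ : _ * (s * u) = 4%:R * (r + 1 - 2%:R * t) * (s * u) ^+ 2); last by ring.
rewrite su2; apply/eqP; rewrite -subr_eq0; apply/eqP.
transitivity ((r + 1 - 2%:R * t) *
              ((1 - 2%:R * t) ^+ 2 - r ^+ 2 + 4%:R * t * (1 - n * t))); first by ring.
by rewrite hr; ring.
Qed.

Lemma param_bounds (C : numClosedFieldType) (N : nat) (t : C) :
  (3 <= N)%N -> 0 <= t -> t <= N%:R^-1 ->
  [/\ N%:R * t <= 1, 0 <= 1 - 4%:R * (N.-1)%:R * t ^+ 2 & 0 < 1 - 2%:R * t].
Proof.
move=> hN t_ge0 t_le.
have N_gt0 : 0 < N%:R :> C by rewrite ltr0n; apply: leq_trans hN.
have Nt_le1 : N%:R * t <= 1.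
  by have := ler_wpM2l (ltW N_gt0) t_le; rewrite mulfV // lt0r_neq0.
split => //.
  rewrite subr_ge0; apply: le_trans (_ : (N%:R * t) ^+ 2 <= 1); last first.
    by rewrite exprn_ile1 // mulr_ge0 // ltW.
  rewrite exprMn ler_wpM2r ?exprn_ge0 // -natrM -natrX ler_nat.
  by rewrite -subn1; nia.
have : 3%:R * t <= 1 by apply: le_trans Nt_le1; rewrite ler_wpM2r // ler_nat.
move=> h3; have -> : 1 - 2%:R * t = (2%:R * (1 - 3%:R * t) + 1) / 3%:R by field.
by rewrite divr_gt0 ?ltr0n // ltr_wpDl // mulr_ge0 // subr_ge0.
Qed.

(* The best witness for psi_t: its squared overlap is the largest eigenvalue
   (1 + r)/2 of the reduced density matrix of a single party. *)
Lemma overlap_psi_t_best (C : numClosedFieldType) (N D : nat) (t r : C)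
  (D_gt1 : (1 < D)%N) (z : 'I_N) :
  0 <= t -> N%:R * t <= 1 -> r ^+ 2 = 1 - 4%:R * (N%:R - 1) * t ^+ 2 ->
  0 < r + 1 - 2%:R * t ->
  let a := two_level D_gt1 (r + 1 - 2%:R * t) (2%:R * sqrtC (1 - N%:R * t) * sqrtC t) in
  overlap (best_product z a (@psi_t C N D t)) (@psi_t C N D t) = (1 + r) / 2%:R.
Proof.
move=> t_ge0 Nt_le1 r_sq p_gt0 a.
have q_ge0 : 0 <= 2%:R * sqrtC (1 - N%:R * t) * sqrtC t.
  by rewrite !mulr_ge0 ?sqrtC_ge0 ?subr_ge0.
rewrite overlap_psi_t_witness ?(ltW p_gt0) //.
have sum_gt0 : 0 < (r + 1 - 2%:R * t) ^+ 2 + (2%:R * sqrtC (1 - N%:R * t) * sqrtC t) ^+ 2.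
  by rewrite ltr_wpDr ?exprn_ge0 ?exprn_gt0.
apply/eqP; rewrite eqr_div ?lt0r_neq0 ?ltr0n // [X in X == _]mulrC.
by rewrite (witness_eigen (sqrtCK _) (sqrtCK _) r_sq erefl erefl).
Qed.

Theorem lemma2 (C : numClosedFieldType) (N D : nat) (t : C)
  (hN : (3 <= N)%N) (hD : (2 <= D)%N)
  (ht0 : 0 <= t) (ht1 : t <= N%:R^-1)
  (p : locc C N D) (hp : valid_locc p) :
  succ_prob p (@psi_t C N D t) <= 1 - sqrtC (1 - 4%:R * (N.-1)%:R * t ^+ 2).
Proof.
have [Nt_le1 disc_ge0 two_t_lt1] := param_bounds hN ht0 ht1.
set r := sqrtC _; pose z : 'I_N := Ordinal (leq_trans (isT : 0 < 3)%N hN).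
have r_sq : r ^+ 2 = 1 - 4%:R * (N%:R - 1) * t ^+ 2.
  by rewrite sqrtCK -subn1 natrB // (leq_trans _ hN).
have p_gt0 : 0 < r + 1 - 2%:R * t by rewrite -addrA ltr_wpDl ?sqrtC_ge0.
pose a := two_level hD (r + 1 - 2%:R * t) (2%:R * sqrtC (1 - N%:R * t) * sqrtC t).
have := succ_prob_le_overlap (ltnW hD) (erefl : nat_of_ord z = 0%N) hp (@psi_t C N D t)
          (best_product_split z a (@psi_t C N D t)).
rewrite psi_t_norm // (overlap_psi_t_best hD z ht0 Nt_le1 r_sq p_gt0).
by have -> : 2%:R * (1 - (1 + r) / 2%:R) = 1 - r by field.
Qed.
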